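(* Let $k\ge 2$. The $3$-graph $\mathcal{E}\cup\mathcal{F}$ contains no three edges whose union has exactly $4$ vertices.
   Context: Let $A_1=\{v^1_1,\dots,v^1_{4k-3}\}$, $A_2=\{v^2_1,\dots,v^2_{4k-3}\}$ be disjoint sets and $v_1^3$ a further vertex. For $i\in[1,k-1]$ define the sets of $3$-edges (writing $xyz$ for $\{x,y,z\}$) $\mathcal{E}_{1,i}=\{v_{2i-1}^1v_j^2v_{j+1}^2 : j\in[2i-1,4k-2-2i]\}$, $\mathcal{E}_{2,i}=\{v_j^1v_{j+1}^1v_{4k-1-2i}^2 : j\in[2i-1,4k-2-2i]\}$, $\mathcal{E}_{3,i}=\{v_{4k-1-2i}^1v_j^2v_{j+1}^2 : j\in[2i+1,4k-2-2i]\}$, $\mathcal{E}_{4,i}=\{v_j^1v_{j+1}^1v_{2i+1}^2 : j\in[2i+1,4k-2-2i]\}$, $\mathcal{E}_i=\mathcal{E}_{1,i}\cup\mathcal{E}_{2,i}\cup\mathcal{E}_{3,i}\cup\mathcal{E}_{4,i}$, and $\mathcal{E}=\bigcup_{i=1}^{k-1}\mathcal{E}_i$. Let $\mathcal{F}=\{v_j^lv_{j+1}^lv_1^3 : j\in[1,4k-4],\ l\in\{1,2\}\}$. *)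

From HB Require Import structures.
From mathcomp Require Import all_boot finmap.
Set Implicit Arguments. Unset Strict Implicit. Unset Printing Implicit Defensive.
Local Open Scope fset_scope.

Definition vtx : Type := (nat * nat)%type.
Definition v (l j : nat) : vtx := (l, j).

Definition edge3 (x y z : vtx) : {fset vtx} := [fset x; y; z].

Definition inE1 (k i : nat) (e : {fset vtx}) : Prop :=
  exists j, 2*i-1 <= j <= 4*k-2-2*i /\ e = edge3 (v 1 (2*i-1)) (v 2 j) (v 2 j.+1).
Definition inE2 (k i : nat) (e : {fset vtx}) : Prop :=
  exists j, 2*i-1 <= j <= 4*k-2-2*i /\ e = edge3 (v 1 j) (v 1 j.+1) (v 2 (4*k-1-2*i)).
Definition inE3 (k i : nat) (e : {fset vtx}) : Prop :=
  exists j, 2*i+1 <= j <= 4*k-2-2*i /\ e = edge3 (v 1 (4*k-1-2*i)) (v 2 j) (v 2 j.+1).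
Definition inE4 (k i : nat) (e : {fset vtx}) : Prop :=
  exists j, 2*i+1 <= j <= 4*k-2-2*i /\ e = edge3 (v 1 j) (v 1 j.+1) (v 2 (2*i+1)).

Definition inE (k : nat) (e : {fset vtx}) : Prop :=
  exists i, 1 <= i <= k-1 /\ (inE1 k i e \/ inE2 k i e \/ inE3 k i e \/ inE4 k i e).

Definition inF (k : nat) (e : {fset vtx}) : Prop :=
  exists l j, (l = 1 \/ l = 2) /\ 1 <= j <= 4*k-4 /\ e = edge3 (v l j) (v l j.+1) (v 3 1).

Definition inEF (k : nat) (e : {fset vtx}) : Prop := inE k e \/ inF k e.

From mathcomp Require Import all_boot finmap zify.
Local Open Scope fset_scope.

(* Every edge of E ∪ F consists of two consecutive vertices v^l_j, v^l_{j+1}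
   of one layer together with an apex of odd index in another layer (for F
   the apex is v^3_1), so it suffices to prove the claim for the 3-graph of
   all such triples.
   Three distinct triples spanning four vertices are {b,c,d}, {a,c,d} and
   {a,b,d}.  If d is the apex of two of them, then a, b, c are pairwise
   consecutive in one layer, which is impossible.  Otherwise d lies in the
   consecutive pairs of two of them, say of {b,c,d} and {a,c,d}; as no triple
   lies in a single layer, both pairs are {c,d}, and then {a,b,d} forces the
   apexes a and b to be consecutive, although both have odd index. *)

Lemma fsetD1_of_card (T : choiceType) (A U : {fset T}) :
  A `<=` U -> #|` U| = #|` A|.+1 -> exists2 a, a \in U & A = U `\ a.
Proof.
move=> sAU cardU.
have /fset0Pn [a /fsetDP [aU aNA]] : U `\` A != fset0.
  by rewrite -cardfs_gt0 cardfsDS // cardU subSnn.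
exists a => //; apply/eqP; rewrite eqEfcard fsubsetD1 sAU aNA.
by move: cardU; rewrite (cardfsD1 a) aU add1n => -[->]; rewrite leqnn.
Qed.

Lemma triples_of_card4_union {T : choiceType} {A B C : {fset T}} :
  #|` A| = 3 -> #|` B| = 3 -> #|` C| = 3 -> A != B -> A != C -> B != C ->
  #|` A `|` B `|` C| = 4 ->
  exists a b c d, [/\ uniq [:: a; b; c; d],
    {subset [:: b; c; d] <= A}, {subset [:: a; c; d] <= B}
    & {subset [:: a; b; d] <= C}].
Proof.
set U := A `|` B `|` C => cardA cardB cardC nAB nAC nBC cardU.
have /fsubUsetP [/fsubUsetP [sAU sBU] sCU] := fsubset_refl U.
clearbody U.
have [a aU defA] : exists2 a, a \in U & A = U `\ a by apply: fsetD1_of_card; rewrite ?cardA.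
have [b bU defB] : exists2 b, b \in U & B = U `\ b by apply: fsetD1_of_card; rewrite ?cardB.
have [c cU defC] : exists2 c, c \in U & C = U `\ c by apply: fsetD1_of_card; rewrite ?cardC.
have [d /fsetDP [dU]] : exists d, d \in U `\` [fset a; b; c].
  apply/fset0Pn; rewrite -cardfs_gt0 cardfsDS; last first.
    by rewrite !fsubUset !fsub1set aU bU cU.
  by rewrite cardU subn_gt0 fsetUC cardfsU1 cardfs2; case: (_ \notin _); case: (_ != _).
rewrite !inE -!orbA !negb_or => /and3P [da db dc].
have ab : a != b by apply: contraNneq nAB => ab; rewrite defA defB ab.
have ac : a != c by apply: contraNneq nAC => ac; rewrite defA defC ac.
have bc : b != c by apply: contraNneq nBC => bc; rewrite defB defC bc.
exists a, b, c, d; split.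
- by rewrite /= !inE !negb_or ab ac bc !(eq_sym _ d) da db dc.
- by move=> x; rewrite defA !inE => /or3P [] /eqP ->; rewrite ?bU ?cU ?dU andbT // eq_sym.
- by move=> x; rewrite defB !inE => /or3P [] /eqP ->; rewrite ?aU ?cU ?dU andbT // eq_sym.
- by move=> x; rewrite defC !inE => /or3P [] /eqP ->; rewrite ?aU ?bU ?dU andbT // eq_sym.
Qed.

Definition apex_edge (l j m q : nat) : {fset vtx} := edge3 (v l j) (v l j.+1) (v m q).

Definition apex_graph (e : {fset vtx}) : Prop :=
  exists l j m q, [/\ l != m, odd q & e = apex_edge l j m q].

Definition consecutive (x y : vtx) : bool :=
  (x.1 == y.1) && ((x.2.+1 == y.2) || (y.2.+1 == x.2)).

Definition apex_over (w x y : vtx) : bool := [&& consecutive x y, w.1 != x.1 & odd w.2].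

Definition apex_triple (x y z : vtx) : bool :=
  [|| apex_over x y z, apex_over y x z | apex_over z x y].

Lemma card_apex_graph {e : {fset vtx}} : apex_graph e -> #|` e| = 3.
Proof.
case=> l [j [m [q [lm _ ->]]]].
by rewrite /apex_edge /edge3 fsetUC cardfsU1 cardfs2 !inE /v !xpair_eqE; lia.
Qed.

Lemma apex_graph_triple {e : {fset vtx}} {x y z : vtx} : apex_graph e ->
  {subset [:: x; y; z] <= e} -> uniq [:: x; y; z] -> apex_triple x y z.
Proof.
case=> [l [j [m [q [lm oq ->]]]]] sub uxyz.
have := sub x; have := sub y; have := sub z.
rewrite /apex_edge /edge3 !inE -!orbA !eqxx ?orbT /=.
move=> /(_ isT) /or3P [] /eqP zE /(_ isT) /or3P [] /eqP yE /(_ isT) /or3P [] /eqP xE;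
move: uxyz; rewrite {}xE {}yE {}zE /= !inE /v /apex_triple /apex_over /consecutive /= !xpair_eqE;
lia.
Qed.

Lemma apex_triple_link_triangle_free (a b c d : vtx) :
  ~~ [&& apex_triple b c d, apex_triple a c d & apex_triple a b d].
Proof.
apply/negP; rewrite /apex_triple /apex_over /consecutive.
by case/and3P => /or3P [] ? /or3P [] ? /or3P [] ?; lia.
Qed.

Lemma apex_graph_no_three_edges_on_four_vertices (e1 e2 e3 : {fset vtx}) :
  apex_graph e1 -> apex_graph e2 -> apex_graph e3 ->
  e1 <> e2 -> e1 <> e3 -> e2 <> e3 -> #|` e1 `|` e2 `|` e3| <> 4.
Proof.
move=> g1 g2 g3 /eqP n12 /eqP n13 /eqP n23 cardU.
have [a [b [c [d [uabcd sub1 sub2 sub3]]]]] := triples_of_card4_union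
  (card_apex_graph g1) (card_apex_graph g2) (card_apex_graph g3) n12 n13 n23 cardU.
have uniq_mask m : uniq (mask m [:: a; b; c; d]) := subseq_uniq (mask_subseq m _) uabcd.
apply: (elimN and3P (apex_triple_link_triangle_free a b c d)); split.
- exact: apex_graph_triple g1 sub1 (uniq_mask [:: false; true; true; true]).
- exact: apex_graph_triple g2 sub2 (uniq_mask [:: true; false; true; true]).
- exact: apex_graph_triple g3 sub3 (uniq_mask [:: true; true; false; true]).
Qed.

Lemma edge3_rotate (x y z : vtx) : edge3 x y z = edge3 y z x.
Proof. by apply/fsetP => t; rewrite !inE -orbA orbC. Qed.

Lemma inEF_apex_graph (k : nat) (e : {fset vtx}) : inEF k e -> apex_graph e.
Proof.
case=> [[i [hi [[j [_ ->]]|[[j [_ ->]]|[[j [_ ->]]|[j [_ ->]]]]]]]|[l [j [hl [_ ->]]]]].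
- by exists 2, j, 1, (2 * i - 1)%N; split; [| lia | exact: edge3_rotate].
- by exists 1, j, 2, (4 * k - 1 - 2 * i)%N; split; [| lia |].
- by exists 2, j, 1, (4 * k - 1 - 2 * i)%N; split; [| lia | exact: edge3_rotate].
- by exists 1, j, 2, (2 * i + 1)%N; split; [| lia |].
- by exists l, j, 3, 1; split; [lia | |].
Qed.

Theorem lemma3p1 (k : nat) (hk : 2 <= k) (e1 e2 e3 : {fset vtx}) :
  inEF k e1 -> inEF k e2 -> inEF k e3 ->
  e1 <> e2 -> e1 <> e3 -> e2 <> e3 ->
  #|` e1 `|` e2 `|` e3| <> 4.
Proof.
move=> /inEF_apex_graph g1 /inEF_apex_graph g2 /inEF_apex_graph g3.
exact: apex_graph_no_three_edges_on_four_vertices.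
Qed.
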